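(* Let $\mathcal{P}_s=\{(M,A,U)\in\mathbb{R}^3_+:\gamma M=A\}$, $\mathbb{M}_a=\{\gamma M>A\}$, $\mathbb{M}_s=\{\gamma M<A\}$ (subsets of $\mathbb{R}^3_+$). (i) If $\mathcal{N}_F>1$, then $\mathbf{E}_1^*\in\mathcal{P}_s$ iff $\mathcal{N}_M=\mathcal{N}_F$, $\mathbf{E}_1^*\in\mathbb{M}_a$ iff $\mathcal{N}_M>\mathcal{N}_F$, and $\mathbf{E}_1^*\in\mathbb{M}_s$ iff $\mathcal{N}_M<\mathcal{N}_F$. (ii) If $\mathcal{N}_M>1$ and $\theta_M>1$, then $\mathbf{E}_2^*\in\mathcal{P}_s$ iff $\mathcal{N}_M=\mathcal{N}_F$, $\mathbf{E}_2^*\in\mathbb{M}_s$ iff $\mathcal{N}_F>\mathcal{N}_M$, and $\mathbf{E}_2^*\in\mathbb{M}_a$ iff $\mathcal{N}_M>\mathcal{N}_F$. (iii) If $\mathcal{N}_M=\mathcal{N}_F>1$, then $\mathbf{E}_1^*=\mathbf{E}_2^*\in\mathcal{P}_s$. Consequently $\mathbf{E}_1^*$ is a regular equilibrium of the piecewise smooth natural system when $\mathcal{N}_M>\mathcal{N}_F>1$, and $\mathbf{E}_2^*$ is a regular equilibrium when $\mathcal{N}_F>\mathcal{N}_M>1$ (with $\theta_M>1$).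
   Context: Parameters: $r\in(0,1)$, $\rho,\sigma,\mu,\delta,\nu,\eta>0$, $\gamma\ge1$. $\mathcal{N}_M:=\frac{\gamma r\rho\nu}{\mu(\delta+\eta)}$, $\mathcal{N}_F:=\frac{(1-r)\rho\nu}{\delta(\delta+\eta+\nu)}$, $\theta_M:=\frac{(1-r)\mu(\delta+\eta)}{\gamma r\delta\nu}$, $\vartheta:=(1-r)\mu+r\delta$. $\mathbf{E}_1^*=(M_1^*,A_1^*,U_1^* )$ with $M_1^*=r\frac{\delta}{\vartheta}\frac{1}{\sigma}\ln\mathcal{N}_F$, $A_1^*=(1-r)\frac{\mu}{\vartheta}\frac{\delta+\eta}{\delta+\eta+\nu}\frac1\sigma\ln\mathcal{N}_F$, $U_1^*=(1-r)\frac{\mu}{\vartheta}\frac{\nu}{\delta+\eta+\nu}\frac1\sigma\ln\mathcal{N}_F$. $\mathbf{E}_2^*=(M_2^*,A_2^*,U_2^* )$ with $M_2^*=\frac{\delta+\eta}{\gamma\nu\theta_M+\eta+\delta}\frac1\sigma\ln\mathcal{N}_M$, $A_2^*=\frac{\gamma\nu(\theta_M-1)}{\gamma\nu\theta_M+\eta+\delta}\frac1\sigma\ln\mathcal{N}_M$, $U_2^*=\frac{\gamma\nu}{\gamma\nu\theta_M+\eta+\delta}\frac1\sigma\ln\mathcal{N}_M$. The natural piecewise smooth system uses the vector field $\Phi_1$ on $\mathbb{M}_a$ and $\Phi_2$ on $\mathbb{M}_s$, where $\Phi_1=\big(r\rho Ue^{-\sigma S}-\mu M,(1-r)\rho Ue^{-\sigma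 S}-\nu A+\eta U-\delta A,\nu A-(\eta+\delta)U\big)$ and $\Phi_2=\big(r\rho Ue^{-\sigma S}-\mu M,(1-r)\rho Ue^{-\sigma S}-\nu\gamma M+\eta U-\delta A,\nu\gamma M-(\eta+\delta)U\big)$, $S=M+A+U$; a regular equilibrium is a zero of $\Phi_1$ lying in $\mathbb{M}_a$ or of $\Phi_2$ lying in $\mathbb{M}_s$. *)

From Stdlib Require Import Reals.
Open Scope R_scope.

Record params := Params {
  p_r : R; p_rho : R; p_sigma : R; p_mu : R;
  p_delta : R; p_nu : R; p_eta : R; p_gamma : R }.

Definition admissible (p : params) : Prop :=
  0 < p_r p < 1 /\ 0 < p_rho p /\ 0 < p_sigma p /\ 0 < p_mu p /\
  0 < p_delta p /\ 0 < p_nu p /\ 0 < p_eta p /\ 1 <= p_gamma p.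

Section Quantities.
Variable p : params.
Let r := p_r p. Let rho := p_rho p. Let sigma := p_sigma p. Let mu := p_mu p.
Let delta := p_delta p. Let nu := p_nu p. Let eta := p_eta p. Let gamma := p_gamma p.

Definition N_M : R := gamma * r * rho * nu / (mu * (delta + eta)).
Definition N_F : R := (1 - r) * rho * nu / (delta * (delta + eta + nu)).
Definition theta_M : R := (1 - r) * mu * (delta + eta) / (gamma * r * delta * nu).
Definition vartheta : R := (1 - r) * mu + r * delta.

(* Points of R^3 are triples (M, A, U). *)
Definition E1_star : R * R * R :=
  ( r * (delta / vartheta) * (1 / sigma) * ln N_F,
    (1 - r) * (mu / vartheta) * ((delta + eta) / (delta + eta + nu)) * (1 / sigma) * ln N_F,
    (1 - r) * (mu / vartheta) * (nu / (delta + eta + nu)) * (1 / sigma) * ln N_F ).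

Definition E2_star : R * R * R :=
  ( (delta + eta) / (gamma * nu * theta_M + eta + delta) * (1 / sigma) * ln N_M,
    gamma * nu * (theta_M - 1) / (gamma * nu * theta_M + eta + delta) * (1 / sigma) * ln N_M,
    gamma * nu / (gamma * nu * theta_M + eta + delta) * (1 / sigma) * ln N_M ).

Definition Phi1 (x : R * R * R) : R * R * R :=
  let '(M, A, U) := x in
  let S := M + A + U in
  ( r * rho * U * exp (- sigma * S) - mu * M,
    (1 - r) * rho * U * exp (- sigma * S) - nu * A + eta * U - delta * A,
    nu * A - (eta + delta) * U ).

Definition Phi2 (x : R * R * R) : R * R * R :=
  let '(M, A, U) := x in
  let S := M + A + U in
  ( r * rho * U * exp (- sigma * S) - mu * M,
    (1 - r) * rho * U * exp (- sigma * S) - nu * gamma * M + eta * U - delta * A,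
    nu * gamma * M - (eta + delta) * U ).

Definition in_R3plus (x : R * R * R) : Prop :=
  let '(M, A, U) := x in 0 <= M /\ 0 <= A /\ 0 <= U.

Definition in_Ps (x : R * R * R) : Prop :=
  in_R3plus x /\ let '(M, A, _) := x in gamma * M = A.
Definition in_Ma (x : R * R * R) : Prop :=
  in_R3plus x /\ let '(M, A, _) := x in gamma * M > A.
Definition in_Ms (x : R * R * R) : Prop :=
  in_R3plus x /\ let '(M, A, _) := x in gamma * M < A.

Definition regular_equilibrium (x : R * R * R) : Prop :=
  (Phi1 x = (0, 0, 0) /\ in_Ma x) \/ (Phi2 x = (0, 0, 0) /\ in_Ms x).

End Quantities.

From Stdlib Require Import Reals Lra Psatz.
Open Scope R_scope.

(* Everything is governed by the sign of the single "balance" quantity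
     B := gamma r delta (delta + eta + nu) - (1 - r) mu (delta + eta).
   By direct computation, N_M - N_F, and the switching gap gamma M - A at
   E1* (when N_F > 1) and at E2* (when N_M > 1, theta_M > 1), are each B
   times a strictly positive factor; the positivity of the factors at the
   equilibria comes from ln N_F > 0, resp. ln N_M > 0 and theta_M > 1.
   Hence the gap at either equilibrium has the sign of N_M - N_F, which is
   parts (i) and (ii).  When N_M = N_F we have B = 0, which lets us solve
   for mu and check E1* = E2* componentwise: part (iii).  Finally, E1* is a
   zero of Phi1 and E2* a zero of Phi2 (since exp (- ln N) = 1 / N), so
   with (i) and (ii) they are regular equilibria in the stated regimes. *)

Lemma same_sign_of_common_factor (K a b x y : R) :
  0 < a -> 0 < b -> x = K * a -> y = K * b ->
  (x = 0 <-> y = 0) /\ (x > 0 <-> y > 0) /\ (x < 0 <-> y < 0).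
Proof.
intros Ha Hb -> ->.
destruct (Rtotal_order K 0) as [HK | [HK | HK]].
- assert (K * a < 0) by nra. assert (K * b < 0) by nra. lra.
- subst K. rewrite !Rmult_0_l. lra.
- assert (K * a > 0) by nra. assert (K * b > 0) by nra. lra.
Qed.

Lemma ln_pos (x : R) : 1 < x -> 0 < ln x.
Proof. intros Hx. rewrite <- ln_1. apply ln_increasing; lra. Qed.

(* At an equilibrium value S = ln N / sigma the density factor is 1 / N. *)
Lemma exp_neg_ln (N : R) : 0 < N -> exp (- ln N) = / N.
Proof. intros HN. rewrite exp_Ropp, exp_ln; [reflexivity | exact HN]. Qed.

Section Equilibria.

Variable p : params.
Hypothesis Hp : admissible p.

Local Notation r := (p_r p).
Local Notation rho := (p_rho p).
Local Notation sigma := (p_sigma p).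
Local Notation mu := (p_mu p).
Local Notation delta := (p_delta p).
Local Notation nu := (p_nu p).
Local Notation eta := (p_eta p).
Local Notation gamma := (p_gamma p).

Definition balance : R :=
  gamma * r * delta * (delta + eta + nu) - (1 - r) * mu * (delta + eta).

Definition switching_gap (x : R * R * R) : R :=
  let '(M, A, _) := x in gamma * M - A.

Ltac unpack_params :=
  pose proof Hp as (Hr & Hrho & Hsigma & Hmu & Hdelta & Hnu & Heta & Hgamma).

Ltac positivity :=
  unfold Rgt, Rdiv;
  repeat first [ lra | apply Rmult_lt_0_compat | apply Rinv_0_lt_compat
               | apply Rplus_lt_0_compat ].

Ltac nonzero := apply Rgt_not_eq; positivity.

Lemma threshold_gap :
  exists c, 0 < c /\ N_M p - N_F p = balance * c.
Proof.
unpack_params.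
exists (rho * nu / (mu * (delta + eta) * delta * (delta + eta + nu))).
split; [positivity|].
unfold N_M, N_F, balance. field. lra.
Qed.

Lemma regions_from_balance (x : R * R * R) (c : R) :
  in_R3plus x -> 0 < c -> switching_gap x = balance * c ->
  (in_Ps p x <-> N_M p = N_F p) /\ (in_Ma p x <-> N_M p > N_F p) /\
  (in_Ms p x <-> N_M p < N_F p).
Proof.
destruct x as [[M A] U]; unfold switching_gap.
intros Hx Hc Hgap.
destruct threshold_gap as (c' & Hc' & HN).
destruct (same_sign_of_common_factor _ _ _ _ _ Hc Hc' Hgap HN)
  as (Hzero & Hpos & Hneg).
unfold in_Ps, in_Ma, in_Ms. intuition lra.
Qed.

Lemma E1_nonneg : N_F p > 1 -> in_R3plus (E1_star p).
Proof.
unpack_params. intros HF. pose proof (ln_pos _ HF) as HL.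
unfold in_R3plus, E1_star, vartheta.
split; [|split]; apply Rlt_le; positivity.
Qed.

(* E2* is nonnegative when N_M > 1 and theta_M > 1 (the latter for the A-component). *)
Lemma E2_nonneg : N_M p > 1 -> theta_M p > 1 -> in_R3plus (E2_star p).
Proof.
unpack_params. intros HM Ht. pose proof (ln_pos _ HM) as HL.
unfold in_R3plus, E2_star.
split; [|split]; apply Rlt_le; positivity.
Qed.

Lemma E1_gap :
  switching_gap (E1_star p) =
  balance * (ln (N_F p) / (sigma * vartheta p * (delta + eta + nu))).
Proof.
unpack_params.
unfold switching_gap, E1_star, balance, vartheta.
field. split; [|split]; nonzero.
Qed.

Lemma E2_gap :
  switching_gap (E2_star p) =
  balance * (ln (N_M p) / (sigma * r * delta * (gamma * nu * theta_M p + eta + delta))).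
Proof.
unpack_params.
unfold switching_gap, E2_star, balance, theta_M.
field. repeat split; nonzero.
Qed.

Lemma E1_regions : N_F p > 1 ->
  (in_Ps p (E1_star p) <-> N_M p = N_F p) /\
  (in_Ma p (E1_star p) <-> N_M p > N_F p) /\
  (in_Ms p (E1_star p) <-> N_M p < N_F p).
Proof.
unpack_params. intros HF. pose proof (ln_pos _ HF) as HL.
eapply regions_from_balance;
  [exact (E1_nonneg HF) | | exact E1_gap].
unfold vartheta. positivity.
Qed.

Lemma E2_regions : N_M p > 1 -> theta_M p > 1 ->
  (in_Ps p (E2_star p) <-> N_M p = N_F p) /\
  (in_Ma p (E2_star p) <-> N_M p > N_F p) /\
  (in_Ms p (E2_star p) <-> N_M p < N_F p).
Proof.
unpack_params. intros HM Ht. pose proof (ln_pos _ HM) as HL.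
eapply regions_from_balance;
  [exact (E2_nonneg HM Ht) | | exact E2_gap].
positivity.
Qed.

(* Equal thresholds force a zero balance, which determines mu. *)
Lemma mu_of_equal_thresholds : N_M p = N_F p ->
  mu = gamma * r * delta * (delta + eta + nu) / ((1 - r) * (delta + eta)).
Proof.
unpack_params. intros Heq.
destruct threshold_gap as (c & Hc & HN).
rewrite Heq, Rminus_diag in HN.
assert (Hbal : balance = 0).
{ symmetry in HN. apply Rmult_integral in HN. lra. }
unfold balance in Hbal.
apply (Rmult_eq_reg_r ((1 - r) * (delta + eta))); [| nonzero].
field_simplify; [lra | split; nonzero].
Qed.

Lemma E1_eq_E2 : N_M p = N_F p -> E1_star p = E2_star p.
Proof.
unpack_params. intros Heq.
unfold E1_star, E2_star. rewrite Heq.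
unfold theta_M, vartheta. rewrite (mu_of_equal_thresholds Heq).
f_equal; [f_equal|]; field; repeat split; nonzero.
Qed.

Lemma Phi1_E1 : N_F p > 1 -> Phi1 p (E1_star p) = (0, 0, 0).
Proof.
unpack_params. intros HF.
unfold Phi1, E1_star.
replace (- sigma * _) with (- ln (N_F p))
  by (unfold vartheta; field; repeat split; nonzero).
rewrite exp_neg_ln by lra.
unfold N_F, vartheta.
f_equal; [f_equal|]; field; repeat split; nonzero.
Qed.

Lemma Phi2_E2 : N_M p > 1 -> theta_M p > 1 -> Phi2 p (E2_star p) = (0, 0, 0).
Proof.
unpack_params. intros HM Ht.
unfold Phi2, E2_star.
replace (- sigma * _) with (- ln (N_M p))
  by (unfold theta_M in *; field; repeat split; nonzero).
rewrite exp_neg_ln by lra.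
unfold N_M, theta_M in *.
f_equal; [f_equal|]; field; repeat split; nonzero.
Qed.

End Equilibria.

Theorem mainTheorem6 (p : params) (Hp : admissible p) :
  (* (i) *)
  (N_F p > 1 ->
     (in_Ps p (E1_star p) <-> N_M p = N_F p) /\
     (in_Ma p (E1_star p) <-> N_M p > N_F p) /\
     (in_Ms p (E1_star p) <-> N_M p < N_F p)) /\
  (* (ii) *)
  (N_M p > 1 -> theta_M p > 1 ->
     (in_Ps p (E2_star p) <-> N_M p = N_F p) /\
     (in_Ms p (E2_star p) <-> N_F p > N_M p) /\
     (in_Ma p (E2_star p) <-> N_M p > N_F p)) /\
  (* (iii) *)
  (N_M p = N_F p -> N_F p > 1 -> E1_star p = E2_star p /\ in_Ps p (E1_star p)) /\
  (* consequences *)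
  (N_M p > N_F p -> N_F p > 1 -> regular_equilibrium p (E1_star p)) /\
  (N_F p > N_M p -> N_M p > 1 -> theta_M p > 1 -> regular_equilibrium p (E2_star p)).
Proof.
split; [exact (E1_regions p Hp) |].
split.
{ intros HM Ht. destruct (E2_regions p Hp HM Ht) as (Hs & Ha & Hm).
  unfold Rgt in *. tauto. }
split.
{ intros Heq HF. split; [exact (E1_eq_E2 p Hp Heq) |].
  apply (E1_regions p Hp HF). exact Heq. }
split.
{ intros Hgt HF. left. split; [exact (Phi1_E1 p Hp HF) |].
  apply (E1_regions p Hp HF). exact Hgt. }
intros Hgt HM Ht. right. split; [exact (Phi2_E2 p Hp HM Ht) |].
apply (E2_regions p Hp HM Ht). exact Hgt.
Qed.
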